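(* Let $\underline{\xi}=(\xi_i)_{i\ge 0}$ be a sequence of real numbers with $\xi_0=1$. Let $(r_n)_{n\ge 0}$ be a non-decreasing sequence of positive integers, and let $(Q_n)_{n\ge 0}$, $(A_n)_{n\ge 0}$, $(B_n)_{n\ge 0}$ be sequences of positive real numbers such that $\lim_{n\to\infty} A_n^{1/r_n}=\infty$ and $Q_nB_n\le Q_{n+1}B_{n+1}$ for all sufficiently large integers $n$. For each integer $n\ge 0$ let $$L_n(\underline{X})=\ell_{0n}X_0+\ell_{1n}X_1+\cdots+\ell_{r_n n}X_{r_n}$$ be a linear form with integer coefficients $\ell_{in}\in\mathbb{Z}$ in $r_n+1$ variables, and write $L_n(\underline{\xi})=\sum_{i=0}^{r_n}\ell_{in}\xi_i$. Assume that for all sufficiently large integers $n$, $$\sum_{i=0}^{r_n}|\ell_{in}|\le Q_n,\qquad 0<|L_n(\underline{\xi})|\le \frac{1}{A_n},\qquad \frac{|L_{n-1}(\underline{\xi})|}{|L_n(\underline{\xi})|}\le B_n.$$ Then $A_n\le 2^{r_n+1}(B_nQ_n)^{r_n}$ for all sufficiently large integers $n$. *)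

From Stdlib Require Import Reals Lra Lia ZArith.
Open Scope R_scope.

(* L_n(xi) = sum_{i=0}^{r_n} l_{i n} xi_i ; sum_f_R0 f m = f 0 + ... + f m *)
Definition Lxi (ell : nat -> nat -> Z) (xi : nat -> R) (r : nat -> nat) (n : nat) : R :=
  sum_f_R0 (fun i => IZR (ell i n) * xi i) (r n).

Definition norm1 (ell : nat -> nat -> Z) (r : nat -> nat) (n : nat) : R :=
  sum_f_R0 (fun i => Rabs (IZR (ell i n))) (r n).

From Stdlib Require Import Reals Lra Lia ZArith.
From mathcomp Require all_boot zify.

(* If [A_n > 2^(r_n+1) (B_n Q_n)^(r_n)], Dirichlet's theorem with [X = A_n/2] and
   [eps = min (1/(2 B_n Q_n)) (d/2)] gives an integer vector [y = (q, p_1, ..., p_(r_n))] with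
   [1 <= q <= X] and [|p_i - q xi_i| <= eps].  Then [|L_j(y) - q L_j(xi)| <= eps Q_j], and as
   [L_j(y)] is an integer, the bound [q |L_j(xi)| <= 1/2] (true at [j = n] since [q <= A_n/2])
   propagates down to a fixed index [N] through the ratio bound and [Q_j B_j <= Q_n B_n].  At
   [j = N] this forces [eps >= min (|L_N(xi)|/Q_N) (1/(2 Q_N)) >= d], a contradiction; the
   choice [eps = d/2] is affordable for large [n] because [A_n^(1/r_n) -> oo].
   Dirichlet's theorem in the sharp form [X eps^r >= 1] comes from a pigeonhole argument on
   translates of a box of [s^r] cells in a fine cyclic grid [(Z/M)^r]. *)

Module TorusPigeonhole.
Local Close Scope R_scope.
Import all_boot zify.

Section ShiftedBoxes.
Variables (r M s K : nat) (c : nat -> nat -> nat).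
Hypotheses (M_gt0 : 0 < M) (s_le_M : s <= M).

(* [(q, u)] is the cell [u] of the box [[0, s)^r] translated by [c q] in [(Z/M)^r]. *)
Definition shifted_box_point (x : 'I_K.+1 * {ffun 'I_r -> 'I_s}) : {ffun 'I_r -> 'I_M} :=
  [ffun i => Ordinal (ltn_pmod (x.2 i + c x.1 i) M_gt0)].

Lemma shifted_boxes_overlap : M ^ r < K.+1 * s ^ r ->
  exists (q1 q2 : 'I_K.+1) (u1 u2 : {ffun 'I_r -> 'I_s}),
    q1 != q2 /\ forall i : 'I_r, (u1 i + c q1 i) %% M = (u2 i + c q2 i) %% M.
Proof.
move=> card_lt.
have /injectivePn [[q1 u1] [[q2 u2] neq_x eq_x]] : ~~ injectiveb shifted_box_point.
  apply: contraTN card_lt => /injectiveP/leq_card.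
  by rewrite card_prod !card_ffun !card_ord leqNgt.
have eq_mod i : (u1 i + c q1 i) %% M = (u2 i + c q2 i) %% M.
  by have := congr1 (fun y : {ffun 'I_r -> 'I_M} => val (y i)) eq_x; rewrite !ffunE.
exists q1, q2, u1, u2; split=> //; apply: contraNneq neq_x => eq_q.
rewrite -{}eq_q in eq_mod *; apply/eqP; congr (_, _); apply/ffunP => i; apply/val_inj.
have lt_M (u : {ffun 'I_r -> 'I_s}) : u i < M by exact: leq_trans (ltn_ord _) s_le_M.
by have /eqP := eq_mod i; rewrite eqn_modDr !modn_small // => /eqP.
Qed.
End ShiftedBoxes.

Lemma torus_pigeonhole (r M s K : nat) (c : nat -> nat -> nat) :
  (0 < M)%coq_nat -> (s <= M)%coq_nat -> (Nat.pow M r < (K + 1) * Nat.pow s r)%coq_nat ->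
  exists q1 q2, (q1 < q2)%coq_nat /\ (q2 <= K)%coq_nat /\
    forall i, (i < r)%coq_nat -> exists k : Z,
      (Z.abs (Z.of_nat (c q2 i) - Z.of_nat (c q1 i) - Z.of_nat M * k) < Z.of_nat s)%Z.
Proof.
move=> /ltP M_gt0 /leP s_le_M /ltP card_lt.
have expn_pow m n : Nat.pow m n = m ^ n by elim: n => //= n ->; rewrite expnS.
rewrite !expn_pow addn1 in card_lt.
have [q1 [q2 [u1 [u2 [neq_q eq_mod]]]]] := shifted_boxes_overlap r M s K c M_gt0 s_le_M card_lt.
have close (p1 p2 : 'I_K.+1) (v1 v2 : {ffun 'I_r -> 'I_s}) :
    (forall i : 'I_r, (v1 i + c p1 i) %% M = (v2 i + c p2 i) %% M) ->
    forall i, (i < r)%coq_nat -> exists k : Z,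
      (Z.abs (Z.of_nat (c p2 i) - Z.of_nat (c p1 i) - Z.of_nat M * k) < Z.of_nat s)%Z.
  move=> eq_v i /ltP lt_ir; have := eq_v (Ordinal lt_ir).
  set a := v1 _; set b := v2 _; move=> eq_ab.
  exists (Z.of_nat ((b + c p2 i) %/ M) - Z.of_nat ((a + c p1 i) %/ M))%Z.
  have := divn_eq (a + c p1 i) M; have := divn_eq (b + c p2 i) M.
  have := ltn_ord a; have := ltn_ord b; rewrite eq_ab; lia.
case: (ltngtP q1 q2) => [lt_q|lt_q|/val_inj eq_q]; last by rewrite eq_q eqxx in neq_q.
- by exists q1, q2; do 2?split; [apply/ltP | apply/leP; rewrite -ltnS | exact: close].
- exists q2, q1; do 2?split; [exact/ltP | apply/leP; rewrite -ltnS // |].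
  by apply: close => i; exact: esym (eq_mod i).
Qed.
End TorusPigeonhole.

Lemma Int_part_nonneg (x : R) : 0 <= x -> (0 <= Int_part x)%Z.
Proof.
  intro Hx; destruct (base_Int_part x) as [_ H].
  apply Z.lt_succ_r, lt_IZR; rewrite succ_IZR; lra.
Qed.

Lemma INR_Int_part (x : R) : 0 <= x -> INR (Z.to_nat (Int_part x)) = IZR (Int_part x).
Proof. intro Hx; rewrite INR_IZR_INZ, Z2Nat.id; [reflexivity | now apply Int_part_nonneg]. Qed.

Lemma pow_sub_le_mul (a b : R) (n : nat) :
  0 <= b <= a -> a <= 1 -> a ^ n - b ^ n <= INR n * (a - b).
Proof.
  intros Hba Ha; induction n as [|n IH]; [simpl; lra|].
  rewrite S_INR; cbn [pow].
  assert (b ^ n <= a ^ n) by (apply pow_incr; lra).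
  assert (a ^ n <= 1) by (rewrite <- (pow1 n); apply pow_incr; lra).
  assert (0 <= b ^ n) by (apply pow_le; lra).
  pose proof (pos_INR n); nra.
Qed.

(* With [b = s/M], [eps^r - b^r <= r (eps - b) < r/M], so a fine enough grid loses less
   than the margin [c eps^r - 1]. *)
Lemma fine_grid (r : nat) (c eps : R) :
  0 < eps <= 1 -> 1 < c * eps ^ r ->
  exists M s : nat, (0 < M)%nat /\ INR s <= INR M * eps /\ INR M ^ r < c * INR s ^ r.
Proof.
  intros Heps Hc.
  assert (Her : 0 < eps ^ r) by (apply pow_lt; lra).
  assert (Hc0 : 0 < c) by nra.
  set (d := c * eps ^ r - 1).
  assert (Hd : 0 < d) by (unfold d; lra).
  destruct (INR_archimed d (c * INR r) Hd) as [M0 HdM0].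
  set (M := S M0).
  assert (HM0 : 0 < INR M) by (unfold M; rewrite S_INR; pose proof (pos_INR M0); lra).
  assert (HM : c * INR r < d * INR M) by (unfold M in *; rewrite S_INR in *; nra).
  assert (HMe : 0 <= INR M * eps) by nra.
  set (s := Z.to_nat (Int_part (INR M * eps))).
  assert (Hs : INR s <= INR M * eps < INR s + 1).
  { unfold s; rewrite INR_Int_part by exact HMe. destruct (base_Int_part (INR M * eps)); lra. }
  exists M, s; split; [unfold M; lia | split; [lra|]].
  set (b := INR s / INR M).
  assert (HbM : b * INR M = INR s) by (unfold b; field; lra).
  assert (Hs0 := pos_INR s).
  assert (Hb : 0 <= b <= eps) by (split; nra).
  pose proof (pow_sub_le_mul eps b r Hb (proj2 Heps)) as Hbern.
  assert (Hr0 := pos_INR r).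
  assert (Hgap : INR r * (eps - b) * INR M <= INR r) by nra.
  assert (Hkey : 1 < c * b ^ r).
  { assert (c * (eps ^ r - b ^ r) * INR M <= c * INR r).
    { apply Rle_trans with (c * (INR r * (eps - b) * INR M)); [| apply Rmult_le_compat_l; lra].
      rewrite <- Rmult_assoc; apply Rmult_le_compat_r; [lra |].
      apply Rmult_le_compat_l; lra. }
    unfold d in HM; nra. }
  rewrite <- HbM, Rpow_mult_distr.
  assert (0 < INR M ^ r) by (apply pow_lt; lra).
  nra.
Qed.

Lemma grid_cells_close (M s : nat) (y1 y2 eps : R) (k : Z) :
  (0 < M)%nat -> INR s <= INR M * eps ->
  (Z.abs (Int_part (INR M * frac_part y2) - Int_part (INR M * frac_part y1)
          - Z.of_nat M * k) < Z.of_nat s)%Z ->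
  Rabs (y2 - y1 - IZR (Int_part y2 - Int_part y1 + k)) <= eps.
Proof.
  intros HM Hs Hk.
  set (c1 := Int_part (INR M * frac_part y1)) in *.
  set (c2 := Int_part (INR M * frac_part y2)) in *.
  assert (Hz : IZR (c2 - c1 - Z.of_nat M * k) + 1 <= INR s /\
               - INR s + 1 <= IZR (c2 - c1 - Z.of_nat M * k)).
  { rewrite INR_IZR_INZ, <- succ_IZR, <- opp_IZR, <- succ_IZR.
    split; apply IZR_le; lia. }
  rewrite !minus_IZR, mult_IZR, <- INR_IZR_INZ in Hz.
  destruct (base_Int_part (INR M * frac_part y1)) as [H1 H1'].
  destruct (base_Int_part (INR M * frac_part y2)) as [H2 H2'].
  fold c1 c2 in H1, H1', H2, H2'.
  unfold frac_part in *.
  assert (HM0 : 0 < INR M) by (apply (lt_INR 0); exact HM).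
  rewrite plus_IZR, minus_IZR.
  apply Rabs_le; split; apply (Rmult_le_reg_r (INR M)); nra.
Qed.

Lemma simultaneous_dirichlet (r : nat) (th : nat -> R) (X eps : R) :
  0 < eps <= 1 -> 1 <= X * eps ^ r ->
  exists q : nat, (1 <= q)%nat /\ INR q <= X /\
    forall i, (i < r)%nat -> exists p : Z, Rabs (INR q * th i - IZR p) <= eps.
Proof.
  intros Heps HX.
  assert (HX1 : 1 <= X).
  { assert (eps ^ r <= 1) by (rewrite <- (pow1 r); apply pow_incr; lra).
    assert (0 < eps ^ r) by (apply pow_lt; lra). nra. }
  set (K := Z.to_nat (Int_part X)).
  assert (HK : INR K <= X < INR K + 1).
  { unfold K; rewrite INR_Int_part by lra. destruct (base_Int_part X); lra. }
  destruct (fine_grid r (INR (K + 1)) eps Heps) as [M [s [HM [Hs Hcount]]]].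
  { rewrite plus_INR; simpl (INR 1).
    assert (0 < eps ^ r) by (apply pow_lt; lra). nra. }
  assert (HsM : (s <= M)%nat) by (apply INR_le; pose proof (pos_INR M); nra).
  (* [c q i] is the grid cell of the fractional part of [q th_i]; [s] consecutive cells
     span a width [s/M <= eps]. *)
  set (c q i := Z.to_nat (Int_part (INR M * frac_part (INR q * th i)))).
  destruct (TorusPigeonhole.torus_pigeonhole r M s K c HM HsM) as [q1 [q2 [Hq12 [Hq2 Hclose]]]].
  { apply INR_lt; rewrite mult_INR, !pow_INR; exact Hcount. }
  exists (q2 - q1)%nat; split; [lia | split].
  { assert (INR (q2 - q1) <= INR K) by (apply le_INR; lia). lra. }
  intros i Hi; destruct (Hclose i Hi) as [k Hk].
  exists (Int_part (INR q2 * th i) - Int_part (INR q1 * th i) + k)%Z.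
  rewrite minus_INR, Rmult_minus_distr_r by lia.
  apply (grid_cells_close M s); [exact HM | exact Hs |].
  unfold c in Hk; rewrite !Z2Nat.id in Hk; [exact Hk | |];
    apply Int_part_nonneg, Rmult_le_pos; try apply pos_INR;
    destruct (base_fp (INR q1 * th i)), (base_fp (INR q2 * th i)); lra.
Qed.

Lemma finite_choice {A : Type} (a : A) (P : nat -> A -> Prop) (n : nat) :
  (forall i, (i < n)%nat -> exists x, P i x) ->
  exists f : nat -> A, forall i, (i < n)%nat -> P i (f i).
Proof.
  induction n as [|n IH]; intro H.
  - exists (fun _ => a); intros; lia.
  - destruct IH as [f Hf]; [intros i Hi; apply H; lia|].
    destruct (H n (Nat.lt_succ_diag_r n)) as [x Hx].
    exists (fun i => if Nat.eqb i n then x else f i); intros i Hi.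
    destruct (Nat.eqb_spec i n) as [->|Hne]; [exact Hx | apply Hf; lia].
Qed.

Lemma dirichlet_integer_vector (r : nat) (x : nat -> R) (X eps : R) :
  x 0%nat = 1 -> 0 < eps <= 1 -> 1 <= X * eps ^ r ->
  exists (q : nat) (y : nat -> Z), (1 <= q)%nat /\ INR q <= X /\
    forall i, (i <= r)%nat -> Rabs (IZR (y i) - INR q * x i) <= eps.
Proof.
  intros Hx0 Heps HX.
  destruct (simultaneous_dirichlet r (fun i => x (S i)) X eps Heps HX) as [q [Hq [HqX Hp]]].
  destruct (finite_choice 0%Z _ r Hp) as [p Hp'].
  exists q, (fun i => match i with 0%nat => Z.of_nat q | S i => p i end).
  split; [exact Hq | split; [exact HqX |]].
  intros [|i] Hi.
  - rewrite Hx0, <- INR_IZR_INZ, Rmult_1_r, Rminus_diag, Rabs_R0; lra.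
  - rewrite Rabs_minus_sym; apply Hp'; lia.
Qed.

Lemma sum_f_R0_IZR (f : nat -> Z) (n : nat) : exists z, sum_f_R0 (fun i => IZR (f i)) n = IZR z.
Proof.
  induction n as [|n [z Hz]]; simpl.
  - exists (f 0%nat); reflexivity.
  - exists (z + f (S n))%Z; rewrite Hz, plus_IZR; reflexivity.
Qed.

Lemma Lxi_IZR (ell : nat -> nat -> Z) (y : nat -> Z) (r : nat -> nat) (j : nat) :
  exists z, Lxi ell (fun i => IZR (y i)) r j = IZR z.
Proof.
  destruct (sum_f_R0_IZR (fun i => (ell i j * y i)%Z) (r j)) as [z Hz].
  exists z; rewrite <- Hz; apply sum_eq; intros i _; apply eq_sym, mult_IZR.
Qed.

Lemma Lxi_approx (ell : nat -> nat -> Z) (x y : nat -> R) (r : nat -> nat) (q eps : R) (j : nat) :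
  (forall i, (i <= r j)%nat -> Rabs (y i - q * x i) <= eps) ->
  Rabs (Lxi ell y r j - q * Lxi ell x r j) <= eps * norm1 ell r j.
Proof.
  intro Hy; unfold Lxi, norm1.
  rewrite scal_sum, <- minus_sum, scal_sum.
  eapply Rle_trans; [apply sum_f_R0_triangle | apply sum_Rle]; intros i Hi.
  replace (IZR (ell i j) * y i - IZR (ell i j) * x i * q)
    with (IZR (ell i j) * (y i - q * x i)) by ring.
  rewrite Rabs_mult; apply Rmult_le_compat_l; [apply Rabs_pos | auto].
Qed.

Lemma near_integer_dichotomy (z : Z) (t d : R) :
  Rabs t <= 1 / 2 -> Rabs (IZR z - t) <= d -> Rabs t <= d \/ 1 / 2 <= d.
Proof.
  intros Ht Hz; destruct (Z.eq_dec z 0) as [->|Hz0].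
  - left; rewrite Rminus_0_l, Rabs_Ropp in Hz; exact Hz.
  - right.
    assert (1 <= Rabs (IZR z)) by (rewrite <- abs_IZR; apply IZR_le; lia).
    pose proof (Rabs_triang (IZR z - t) t) as Htri.
    replace (IZR z - t + t) with (IZR z) in Htri by ring; lra.
Qed.

Lemma nat_down_ind (P : nat -> Prop) (N n : nat) :
  P n -> (forall j, (N <= j < n)%nat -> P (S j) -> P j) ->
  forall j, (N <= j <= n)%nat -> P j.
Proof.
  intros Hn Hstep j Hj; remember (n - j)%nat as k eqn:Hk; revert j Hj Hk.
  induction k as [|k IH]; intros j Hj Hk.
  - replace j with n by lia; exact Hn.
  - apply Hstep; [lia | apply IH; lia].
Qed.

Lemma le_chain (f : nat -> R) (N n : nat) :
  (forall j, (N <= j)%nat -> f j <= f (S j)) -> forall j, (N <= j <= n)%nat -> f j <= f n.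
Proof.
  intros Hf; apply nat_down_ind; [lra | intros j Hj Hle; specialize (Hf j ltac:(lia)); lra].
Qed.

Section Descent.

Variables (xi : nat -> R) (r : nat -> nat) (ell : nat -> nat -> Z) (Q B : nat -> R).
Variables (N n : nat) (q eps : R) (y : nat -> Z).

Let T (j : nat) : R := q * Rabs (Lxi ell xi r j).

Hypotheses
  (N_le_n : (N <= n)%nat) (q_ge1 : 1 <= q)
  (Q_pos : forall j, 0 < Q j) (B_pos : forall j, 0 < B j)
  (norm_le : forall j, (N <= j <= n)%nat -> norm1 ell r j <= Q j)
  (ratio_le : forall j, (N <= j < n)%nat ->
     Rabs (Lxi ell xi r j) <= B (S j) * Rabs (Lxi ell xi r (S j)))
  (QB_le : forall j, (N <= j <= n)%nat -> Q j * B j <= Q n * B n)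
  (y_approx : forall j i, (N <= j <= n)%nat -> (i <= r j)%nat ->
     Rabs (IZR (y i) - q * xi i) <= eps)
  (T_n_small : T n <= 1 / 2)
  (eps_QB_small : eps * (Q n * B n) <= 1 / 2).

Lemma eps_nonneg : 0 <= eps.
Proof.
  pose proof (y_approx n 0 ltac:(lia) ltac:(lia)).
  pose proof (Rabs_pos (IZR (y 0%nat) - q * xi 0%nat)); lra.
Qed.

Lemma T_small_or_eps_large (j : nat) :
  (N <= j <= n)%nat -> T j <= 1 / 2 -> T j <= eps * Q j \/ 1 / 2 <= eps * Q j.
Proof.
  intros Hj HT.
  destruct (Lxi_IZR ell y r j) as [z Hz].
  assert (HTabs : T j = Rabs (q * Lxi ell xi r j)) by
    (unfold T; rewrite Rabs_mult, (Rabs_right q) by lra; reflexivity).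
  rewrite HTabs in HT |- *; apply (near_integer_dichotomy z); [exact HT |].
  rewrite <- Hz; eapply Rle_trans; [apply Lxi_approx; intros i Hi; apply (y_approx j i Hj Hi) |].
  apply Rmult_le_compat_l; [exact eps_nonneg | apply norm_le; exact Hj].
Qed.

(* Either [T_(j+1) <= eps Q_(j+1)], and the ratio bound gives
   [T_j <= eps Q_(j+1) B_(j+1) <= eps Q_n B_n <= 1/2], or [eps Q_(j+1) >= 1/2], which together
   with [eps Q_(j+1) B_(j+1) <= 1/2] forces [B_(j+1) <= 1], so that [T_j <= T_(j+1)]. *)
Lemma T_small : forall j, (N <= j <= n)%nat -> T j <= 1 / 2.
Proof.
  apply (nat_down_ind (fun j => T j <= 1 / 2) N n T_n_small); intros j Hj HT.
  assert (Hq : T j <= B (S j) * T (S j)).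
  { unfold T; replace (B (S j) * (q * Rabs (Lxi ell xi r (S j))))
      with (q * (B (S j) * Rabs (Lxi ell xi r (S j)))) by ring.
    apply Rmult_le_compat_l; [lra | apply ratio_le; exact Hj]. }
  pose proof (QB_le (S j) ltac:(lia)); pose proof (B_pos (S j)); pose proof (Q_pos (S j)).
  assert (0 <= T (S j)) by (unfold T; pose proof (Rabs_pos (Lxi ell xi r (S j))); nra).
  pose proof eps_nonneg.
  destruct (T_small_or_eps_large (S j) ltac:(lia) HT) as [Hsmall|Hlarge].
  - assert (B (S j) * T (S j) <= eps * (Q (S j) * B (S j))) by nra. nra.
  - assert (B (S j) <= 1) by nra. nra.
Qed.

Lemma eps_lower_bound : Rmin (Rabs (Lxi ell xi r N) / Q N) (1 / 2 / Q N) <= eps.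
Proof.
  pose proof (Q_pos N).
  assert (Hdiv : forall x, x <= eps * Q N -> x / Q N <= eps).
  { intros x Hx; apply (Rmult_le_reg_r (Q N)); [lra |].
    unfold Rdiv; rewrite Rmult_assoc, Rinv_l, Rmult_1_r by lra; exact Hx. }
  destruct (T_small_or_eps_large N ltac:(lia) (T_small N ltac:(lia))) as [HT|HT].
  - eapply Rle_trans; [apply Rmin_l | apply Hdiv].
    unfold T in HT; pose proof (Rabs_pos (Lxi ell xi r N)); nra.
  - eapply Rle_trans; [apply Rmin_r | apply Hdiv; exact HT].
Qed.

End Descent.

Lemma Rpower_root_bound (A M : R) (n : nat) :
  0 < A -> (0 < n)%nat -> 0 <= M -> M < Rpower A (1 / INR n) -> M ^ n <= A.
Proof.
  intros HA Hn HM HMA.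
  assert (Hroot : Rpower A (1 / INR n) ^ n = A).
  { rewrite <- Rpower_pow by apply exp_pos.
    rewrite Rpower_mult; replace (1 / INR n * INR n) with 1 by (field; apply not_0_INR; lia).
    apply Rpower_1; exact HA. }
  rewrite <- Hroot; apply pow_incr; lra.
Qed.

Lemma inv_pow_le (X y : R) (n : nat) : 0 < y -> y ^ n <= X -> 1 <= X * (1 / y) ^ n.
Proof.
  intros Hy H.
  assert (E : y ^ n * (1 / y) ^ n = 1)
    by (rewrite <- Rpow_mult_distr; replace (y * (1 / y)) with 1 by (field; lra); apply pow1).
  assert (0 < (1 / y) ^ n) by (apply pow_lt, Rdiv_lt_0_compat; lra).
  nra.
Qed.

Lemma approximation_budget (k : nat) (A P d : R) :
  (1 <= k)%nat -> 0 < P -> 0 < d -> 2 ^ S k * P ^ k < A -> (4 / d) ^ k <= A ->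
  1 <= A / 2 * Rmin (1 / (2 * P)) (d / 2) ^ k.
Proof.
  intros Hk HP Hd HAP HAd.
  apply Rmin_case_strong; intros _.
  - apply inv_pow_le; [lra |].
    rewrite Rpow_mult_distr; simpl (2 ^ S k) in HAP; lra.
  - replace (d / 2) with (1 / (2 / d)) by (field; lra).
    apply inv_pow_le; [apply Rdiv_lt_0_compat; lra |].
    replace (4 / d) with (2 * (2 / d)) in HAd by (field; lra).
    rewrite Rpow_mult_distr in HAd.
    assert (2 ^ 1 <= 2 ^ k) by (apply Rle_pow; [lra | lia]).
    assert (0 < (2 / d) ^ k) by (apply pow_lt, Rdiv_lt_0_compat; lra).
    simpl (2 ^ 1) in *; nra.
Qed.

Lemma le_mul_of_div_le (a b c : R) : 0 < b -> a / b <= c -> a <= c * b.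
Proof.
  intros Hb H; apply (Rmult_le_compat_r b) in H; [| lra].
  unfold Rdiv in H; rewrite Rmult_assoc, Rinv_l, Rmult_1_r in H by lra; exact H.
Qed.

Section EventualBound.

Variables (xi : nat -> R) (r : nat -> nat) (Q A B : nat -> R) (ell : nat -> nat -> Z) (N : nat).

Let L (j : nat) : R := Rabs (Lxi ell xi r j).

Hypotheses
  (hxi0 : xi 0%nat = 1) (hr_pos : forall n, (0 < r n)%nat)
  (hr_mono : forall n, (r n <= r (S n))%nat)
  (hQ : forall n, 0 < Q n) (hA : forall n, 0 < A n) (hB : forall n, 0 < B n)
  (hQB : forall n, (N <= n)%nat -> Q n * B n <= Q (S n) * B (S n))
  (hnorm : forall n, (N <= n)%nat -> norm1 ell r n <= Q n)
  (hL : forall n, (N <= n)%nat -> L n <= 1 / A n)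
  (hratio : forall n, (N <= n)%nat -> L n <= B (S n) * L (S n)).

Lemma A_bound_at (d : R) (n : nat) :
  (N <= n)%nat -> 0 < d <= 1 -> d <= Rmin (L N / Q N) (1 / 2 / Q N) -> (4 / d) ^ r n <= A n ->
  A n <= 2 ^ S (r n) * (B n * Q n) ^ r n.
Proof.
  intros Hn Hd HdL HAd; apply Rnot_lt_le; intro Hbig.
  assert (HP : 0 < B n * Q n) by (pose proof (hB n); pose proof (hQ n); nra).
  set (eps := Rmin (1 / (2 * (B n * Q n))) (d / 2)).
  assert (Heps_d : eps <= d / 2) by apply Rmin_r.
  assert (Heps : 0 < eps <= 1)
    by (split; [apply Rmin_glb_lt; [apply Rdiv_lt_0_compat |] |]; lra).
  assert (Hbudget : 1 <= A n / 2 * eps ^ r n)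
    by (apply approximation_budget; [apply hr_pos | exact HP | lra | exact Hbig | exact HAd]).
  destruct (dirichlet_integer_vector (r n) xi (A n / 2) eps hxi0 Heps Hbudget)
    as [q [y [Hq [HqA Hy]]]].
  enough (Rmin (L N / Q N) (1 / 2 / Q N) <= eps) by lra.
  apply (eps_lower_bound xi r ell Q B N n (INR q) eps y Hn (le_INR 1 q Hq) hQ hB).
  - intros j Hj; apply hnorm; lia.
  - intros j Hj; apply hratio; lia.
  - apply (le_chain (fun j => Q j * B j)); intros j Hj; apply hQB; exact Hj.
  - intros j i Hj Hi; apply Hy.
    enough (Hr : INR (r j) <= INR (r n)) by (apply INR_le in Hr; lia).
    apply (le_chain (fun j => INR (r j)) 0); [intros; apply le_INR, hr_mono | lia].
  - pose proof (hL n Hn) as HLn; unfold L in HLn.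
    pose proof (pos_INR q); pose proof (Rabs_pos (Lxi ell xi r n)).
    apply Rle_trans with (A n / 2 * (1 / A n)); [apply Rmult_le_compat; lra |].
    pose proof (hA n); right; field; lra.
  - apply Rle_trans with (1 / (2 * (B n * Q n)) * (B n * Q n)).
    + rewrite (Rmult_comm (Q n)); apply Rmult_le_compat_r; [lra | apply Rmin_l].
    + pose proof (hB n); pose proof (hQ n); right; field; lra.
Qed.

End EventualBound.

Theorem mainTheorem1
  (xi : nat -> R) (r : nat -> nat) (Q A B : nat -> R) (ell : nat -> nat -> Z)
  (hxi0 : xi 0%nat = 1)
  (hr_pos : forall n, (0 < r n)%nat)
  (hr_mono : forall n, (r n <= r (S n))%nat)
  (hQ : forall n, 0 < Q n) (hA : forall n, 0 < A n) (hB : forall n, 0 < B n)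
  (hAlim : cv_infty (fun n => Rpower (A n) (1 / INR (r n))))
  (hQB : exists N, forall n, (N <= n)%nat -> Q n * B n <= Q (S n) * B (S n))
  (hnorm : exists N, forall n, (N <= n)%nat -> norm1 ell r n <= Q n)
  (hL : exists N, forall n, (N <= n)%nat ->
          0 < Rabs (Lxi ell xi r n) /\ Rabs (Lxi ell xi r n) <= 1 / A n)
  (hratio : exists N, forall n, (N <= n)%nat ->
          Rabs (Lxi ell xi r n) / Rabs (Lxi ell xi r (S n)) <= B (S n)) :
  exists N, forall n, (N <= n)%nat ->
    A n <= 2 ^ (S (r n)) * (B n * Q n) ^ (r n).
Proof.
  destruct hQB as [N1 HQB], hnorm as [N2 Hnorm], hL as [N3 HL], hratio as [N4 Hratio].
  set (N := (N1 + N2 + N3 + N4)%nat).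
  assert (HLN : 0 < Rabs (Lxi ell xi r N)) by (apply HL; unfold N; lia).
  set (d := Rmin (Rmin (Rabs (Lxi ell xi r N) / Q N) (1 / 2 / Q N)) 1).
  assert (Hd : 0 < d <= 1).
  { pose proof (hQ N); split; [| apply Rmin_r].
    repeat apply Rmin_glb_lt; try apply Rdiv_lt_0_compat; lra. }
  destruct (hAlim (4 / d)) as [N5 HN5].
  exists (N + N5)%nat; intros n Hn.
  apply (A_bound_at xi r Q A B ell N) with (d := d); try assumption; try lia.
  - intros j Hj; apply HQB; unfold N in *; lia.
  - intros j Hj; apply Hnorm; unfold N in *; lia.
  - intros j Hj; apply HL; unfold N in *; lia.
  - intros j Hj; apply le_mul_of_div_le; [apply HL | apply Hratio]; unfold N in *; lia.
  - apply Rmin_l.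
  - apply Rpower_root_bound; [apply hA | apply hr_pos | | apply HN5; lia].
    apply Rlt_le, Rdiv_lt_0_compat; lra.
Qed.
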